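(* For any $\alpha,\beta\in\mathbb C$ with $\mathrm{Re}(\alpha+\beta)>0$ and any $\lambda_1,\lambda_2,\mu_1,\mu_2\in\mathbb R$, $$\int_{\mathbb R^2}e^{-\alpha(\lambda_1+\lambda_2-\kappa_1-\kappa_2)-\beta(\mu_1+\mu_2-\kappa_1-\kappa_2)-e^{-(\lambda_1-\kappa_1)}-e^{-(\kappa_1-\lambda_2)}-e^{-(\lambda_2-\kappa_2)}-e^{-(\mu_1-\kappa_1)}-e^{-(\kappa_1-\mu_2)}-e^{-(\mu_2-\kappa_2)}}\,d\kappa_1d\kappa_2$$ $$=\int_{\mathbb R^2}e^{-\alpha(\pi_1+\pi_2-\mu_1-\mu_2)-\beta(\pi_1+\pi_2-\lambda_1-\lambda_2)-e^{-(\pi_1-\lambda_1)}-e^{-(\lambda_1-\pi_2)}-e^{-(\pi_2-\lambda_2)}-e^{-(\pi_1-\mu_1)}-e^{-(\mu_1-\pi_2)}-e^{-(\pi_2-\mu_2)}}\,d\pi_1d\pi_2,$$ and both integrals are finite (absolutely convergent). *)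

From HB Require Import structures.
From mathcomp Require Import all_boot all_order all_algebra.
From mathcomp Require Import all_classical all_reals all_analysis.
From mathcomp Require Import complex.
Set Implicit Arguments. Unset Strict Implicit. Unset Printing Implicit Defensive.
Import Order.TTheory GRing.Theory Num.Theory.
Local Open Scope ring_scope.
Local Open Scope complex_scope.

Definition cexp (R : realType) (z : R[i]) : R[i] :=
  (expR (complex.Re z) * cos (complex.Im z)) +i* (expR (complex.Re z) * sin (complex.Im z)).

Definition leb2 (R : realType) :=
  ((@lebesgue_measure R) \x (@lebesgue_measure R))%E.

Definition cintegrable2 (R : realType) (F : R * R -> R[i]) : Prop :=
  [/\ measurable_fun setT (fun k => complex.Re (F k)),
      measurable_fun setT (fun k => complex.Im (F k)) &
      (\int[@leb2 R]_(k in setT) (Normc.normc (F k))%:E < +oo)%E].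

Definition cint2 (R : realType) (F : R * R -> R[i]) : R[i] :=
  (Rintegral (@leb2 R) setT (fun k => complex.Re (F k)))
    +i* (Rintegral (@leb2 R) setT (fun k => complex.Im (F k))).

Definition lhs_integrand (R : realType) (a b : R[i]) (l1 l2 m1 m2 : R)
    (k : R * R) : R[i] :=
  let: (k1, k2) := k in
  cexp (- a * ((l1 + l2 - k1 - k2)%:C) - b * ((m1 + m2 - k1 - k2)%:C)
        - (expR (- (l1 - k1)) + expR (- (k1 - l2)) + expR (- (l2 - k2))
           + expR (- (m1 - k1)) + expR (- (k1 - m2)) + expR (- (m2 - k2)))%:C).

Definition rhs_integrand (R : realType) (a b : R[i]) (l1 l2 m1 m2 : R)
    (p : R * R) : R[i] :=
  let: (p1, p2) := p in
  cexp (- a * ((p1 + p2 - m1 - m2)%:C) - b * ((p1 + p2 - l1 - l2)%:C)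
        - (expR (- (p1 - l1)) + expR (- (l1 - p2)) + expR (- (p2 - l2))
           + expR (- (p1 - m1)) + expR (- (m1 - p2)) + expR (- (p2 - m2)))%:C).

(* The affine map (p1, p2) |-> (s1 - p2, s2 - p1), where
     e^s1 = (e^l2 + e^m2) / (e^-l1 + e^-m1) and e^s2 = (e^l1 + e^m1) / (e^-l2 + e^-m2),
   preserves Lebesgue measure on R^2 and carries the right integrand to the left one:
   it permutes the six exponentials of the weight, and s1 + s2 = l1 + l2 + m1 + m2
   matches the linear part of the exponent.
   For absolute convergence, drop the term e^-k1 (e^l2 + e^m2) from the left weight:
   the modulus of the left integrand is then bounded by a product of functions
   x |-> exp (g x - D e^x) with g = Re (a + b) > 0, each integrable since it is
   at most e^(g x) for x <= 0 and a multiple of e^-x for x >= 0. *)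

From HB Require Import structures.
From mathcomp Require Import all_boot all_order all_algebra.
From mathcomp Require Import all_classical all_reals all_analysis.
From mathcomp Require Import complex measurable_realfun ring lra.
Set Implicit Arguments. Unset Strict Implicit. Unset Printing Implicit Defensive.
Import Order.TTheory GRing.Theory Num.Theory.
Local Open Scope classical_set_scope.
Local Open Scope ring_scope.

Section reflection.
Variable R : realType.
Notation mu := (@lebesgue_measure R).

(* Typed on [measurableTypeR R], the sigma-algebra carrying [lebesgue_measure],
   so that pushforwards along it are measures on that same space. *)
Definition reflection (c : R) : measurableTypeR R -> measurableTypeR R :=
  fun x => c - x.

Lemma measurable_reflection (c : R) : measurable_fun setT (reflection c).
Proof. exact: measurable_funB. Qed.

Lemma pushforward_lebesgue_reflection (c : R) (A : set R) : measurable A ->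
  pushforward mu (reflection c) A = mu A.
Proof.
move=> mA; apply/esym/lebesgue_measure_unique => //=.
  exact: measurable_reflection.
move=> _ _ [[a b]] _ <-; rewrite /pushforward.
have -> : reflection c @^-1` `]a, b] = `[c - b, c - a[%classic.
  by apply/seteqP; split => x /=; rewrite /reflection !in_itv /= =>
    /andP[? ?]; apply/andP; split; lra.
rewrite !lebesgue_measure_itv/= !lte_fin.
have -> : (c - b < c - a) = (a < b) by apply/idP/idP; lra.
by case: ifP => // _; congr EFin; lra.
Qed.

Lemma ge0_integral_reflection (c : R) (h : R -> \bar R) :
  measurable_fun setT h -> (forall x, 0 <= h x)%E ->
  (\int[mu]_x h (c - x)%R = \int[mu]_x h x)%E.
Proof.
move=> mh h0.
have := ge0_integral_pushforward (measurable_reflection c) mu measurableT mh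
  (fun y _ => h0 y).
rewrite preimage_setT => <-.
apply: eq_measure_integral => [|mf A mA _]; first exact: measurable_reflection.
exact: pushforward_lebesgue_reflection.
Qed.
End reflection.

Section loggamma_kernel.
Variable R : realType.
Notation mu := (@lebesgue_measure R).

(* Up to normalization, the density of [ln X] for [X] Gamma-distributed with
   shape [g] and rate [D]. *)
Definition loggamma_kernel (g D x : R) := expR (g * x - D * expR x).

Variables (g D : R).
Hypotheses (g_gt0 : 0 < g) (D_gt0 : 0 < D).

Lemma measurable_loggamma_kernel : measurable_fun setT (loggamma_kernel g D).
Proof.
apply: measurableT_comp => //; apply: measurable_funB; exact: measurable_funM.
Qed.

Lemma loggamma_kernel_le_expR x : loggamma_kernel g D x <= expR (g * x).
Proof.
by rewrite ler_expR lerBlDr lerDl mulr_ge0 ?expR_ge0 ?ltW.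
Qed.

Lemma loggamma_kernel_le_expRN :
  exists2 K : R, 0 <= K & forall x, loggamma_kernel g D x <= K * expR (- x).
Proof.
(* [s] maximizes [(g + 1) x - D e^x]. *)
pose s := ln ((g + 1) / D).
have es : expR s = (g + 1) / D by rewrite lnK // posrE divr_gt0 // ltr_wpDl // ltW.
exists (expR ((g + 1) * (s - 1))) => [|x]; first exact: expR_ge0.
rewrite -expRD ler_expR.
have eDx : D * expR x = (g + 1) * expR (x - s).
  by rewrite expRD expRN es; field; rewrite !lt0r_neq0 // ltr_wpDl // ltW.
have : (g + 1) * (1 + (x - s)) <= D * expR x.
  by rewrite eDx ler_wpM2l ?expR_ge1Dx // addr_ge0 // ltW.
nra.
Qed.

Lemma loggamma_kernel_le_exponential_pdf K x : 0 <= K ->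
  (forall y, loggamma_kernel g D y <= K * expR (- y)) ->
  loggamma_kernel g D x
  <= g^-1 * exponential_pdf g (0 - x) + K * exponential_pdf 1 x.
Proof.
move=> K_ge0 hK; have [x_le0|x_gt0] := leP x 0.
  rewrite exponential_pdfE ?subr_ge0 // mulrA mulVf ?lt0r_neq0 // mul1r.
  apply: (le_trans (loggamma_kernel_le_expR x)).
  by rewrite mulNr sub0r mulrN opprK lerDl mulr_ge0 ?exponential_pdf_ge0.
rewrite (exponential_pdfE 1 (ltW x_gt0)) mul1r mulN1r.
have pdfg_ge0 : 0 <= exponential_pdf g (0 - x).
  by apply: exponential_pdf_ge0; exact: ltW.
by apply: (le_trans (hK x)); rewrite lerDr mulr_ge0 // invr_ge0 ltW.
Qed.

Lemma integral_loggamma_kernel_lty :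
  (\int[mu]_x (loggamma_kernel g D x)%:E < +oo)%E.
Proof.
have [K K_ge0 hK] := loggamma_kernel_le_expRN.
pose pdf1 := @exponential_pdf R 1; pose pdfg := @exponential_pdf R g.
have mpdf1 : measurable_fun setT pdf1 by exact: measurable_exponential_pdf.
have mpdfg : measurable_fun setT (fun x : R => pdfg (0 - x)).
  exact: measurableT_comp (measurable_exponential_pdf _) (measurable_reflection 0).
have pdf1_ge0 x : 0 <= pdf1 x by exact: exponential_pdf_ge0.
have pdfg_ge0 x : 0 <= pdfg x by apply: exponential_pdf_ge0; exact: ltW.
apply: (@le_lt_trans _ _
  (\int[mu]_x (g^-1 * pdfg (0 - x))%:E + \int[mu]_x (K * pdf1 x)%:E)%E).
  rewrite -ge0_integralD //; last 4 first.
  - by move=> x _; rewrite lee_fin mulr_ge0 // invr_ge0 ltW.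
  - by apply/measurable_EFinP; exact: measurable_funM.
  - by move=> x _; rewrite lee_fin mulr_ge0.
  - by apply/measurable_EFinP; exact: measurable_funM.
  apply: ge0_le_integral => //.
  - by move=> x _; rewrite lee_fin expR_ge0.
  - by apply/measurable_EFinP; exact: measurable_loggamma_kernel.
  - by apply/measurable_EFinP; apply: measurable_funD; exact: measurable_funM.
  by move=> x _; rewrite lee_fin; exact: loggamma_kernel_le_exponential_pdf.
under eq_integral do rewrite EFinM.
under [X in (_ + X)%E]eq_integral do rewrite EFinM.
rewrite !ge0_integralZl //; last 5 first.
- exact/measurable_EFinP.
- by move=> x _; rewrite lee_fin.
- exact/measurable_EFinP.
- by move=> x _; rewrite lee_fin.
- by rewrite lee_fin invr_ge0 ltW.
rewrite (ge0_integral_reflection 0 (h := EFin \o pdfg)); last 2 first.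
- by apply/measurable_EFinP; exact: measurable_exponential_pdf.
- by move=> x; rewrite lee_fin.
by rewrite !integral_exponential_pdf // !mule1 -EFinD ltry.
Qed.

End loggamma_kernel.

Section product_integral.
Local Open Scope ereal_scope.
Context d1 d2 (T1 : measurableType d1) (T2 : measurableType d2) (R : realType).
Variables (m1 : {sigma_finite_measure set T1 -> \bar R})
          (m2 : {sigma_finite_measure set T2 -> \bar R}).

Lemma ge0_integral_prod_mul (f : T1 -> R) (g : T2 -> R) :
  measurable_fun setT f -> measurable_fun setT g ->
  (forall x, 0 <= f x)%R -> (forall y, 0 <= g y)%R ->
  \int[m1 \x m2]_z (f z.1 * g z.2)%:E
  = \int[m1]_x (f x)%:E * \int[m2]_y (g y)%:E.
Proof.
move=> mf mg f0 g0.
have mEf : measurable_fun setT (EFin \o f) by exact/measurable_EFinP.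
have mEg : measurable_fun setT (EFin \o g) by exact/measurable_EFinP.
have g_int_ge0 : 0 <= \int[m2]_y (g y)%:E by apply: integral_ge0 => y _; rewrite lee_fin.
rewrite fubini_tonelli1 /fubini_F /=; last 2 first.
- by apply/measurable_EFinP; apply: measurable_funM; exact: measurableT_comp.
- by move=> z; rewrite lee_fin mulr_ge0.
under eq_integral => x _.
  under eq_integral do rewrite EFinM.
  rewrite ge0_integralZl ?lee_fin //; last by move=> y _; rewrite lee_fin.
  over.
by rewrite /= ge0_integralZr // => x _; rewrite lee_fin.
Qed.

End product_integral.

Lemma integral_loggamma_kernel2_lty (R : realType) (c g A D : R) :
  0 < g -> 0 < A -> 0 < D ->
  (\int[@leb2 R]_k (expR c * loggamma_kernel g A k.1 * loggamma_kernel g D k.2)%:E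
   < +oo)%E.
Proof.
move=> g_gt0 A_gt0 D_gt0.
have kernel_ge0 B x : 0 <= loggamma_kernel g B x by exact: expR_ge0.
have mkA := measurable_loggamma_kernel g A.
have ckA_ge0 x : 0 <= expR c * loggamma_kernel g A x by rewrite mulr_ge0 ?expR_ge0.
rewrite /leb2 (ge0_integral_prod_mul _ _ (f := fun x => expR c * _ x)) //; last 2 first.
- exact: measurable_funM.
- exact: measurable_loggamma_kernel.
apply: lte_mul_pinfty; last exact: integral_loggamma_kernel_lty.
  by apply: integral_ge0 => x _; rewrite lee_fin.
rewrite ge0_fin_numE; last by apply: integral_ge0 => x _; rewrite lee_fin.
under eq_integral do rewrite EFinM.
rewrite ge0_integralZl //; last 2 first.
- exact/measurable_EFinP.
- by move=> x _; rewrite lee_fin.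
by rewrite lte_mul_pinfty ?lee_fin ?expR_ge0 ?(integral_loggamma_kernel_lty g_gt0 A_gt0).
Qed.

Section complex_measurable.
Variable R : realType.

Lemma normcE (z : R[i]) :
  Normc.normc z = Num.sqrt (complex.Re z ^+ 2 + complex.Im z ^+ 2).
Proof. by case: z. Qed.

Lemma normc_cexp (z : R[i]) : Normc.normc (cexp z) = expR (complex.Re z).
Proof.
by rewrite normcE /= !exprMn -mulrDr cos2Dsin2 mulr1 sqrtr_sqr ger0_norm ?expR_ge0.
Qed.

Context d (T : measurableType d) (F : T -> R[i]).
Hypotheses (mRe : measurable_fun setT (fun x => complex.Re (F x)))
           (mIm : measurable_fun setT (fun x => complex.Im (F x))).

Lemma measurable_normc : measurable_fun setT (fun x => Normc.normc (F x)).
Proof.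
rewrite (funext (fun x => normcE (F x))).
apply: measurableT_comp; first exact: continuous_measurable_fun (@sqrt_continuous R).
by apply: measurable_funD; exact: measurable_funX.
Qed.

Lemma measurable_Re_cexp : measurable_fun setT (fun x => complex.Re (cexp (F x))).
Proof.
apply: measurable_funM; first exact: measurableT_comp mRe.
exact: measurableT_comp (continuous_measurable_fun (@continuous_cos R)) mIm.
Qed.

Lemma measurable_Im_cexp : measurable_fun setT (fun x => complex.Im (cexp (F x))).
Proof.
apply: measurable_funM; first exact: measurableT_comp mRe.
exact: measurableT_comp (continuous_measurable_fun (@continuous_sin R)) mIm.
Qed.

End complex_measurable.

Section swap_reflection.
Variable R : realType.

Definition swap_reflection (b c : R) (p : measurableTypeR R * measurableTypeR R) :
    measurableTypeR R * measurableTypeR R :=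
  (reflection b p.2, reflection c p.1).

Variables b c : R.

Lemma measurable_swap_reflection : measurable_fun setT (swap_reflection b c).
Proof.
apply: measurable_fun_pair.
  exact: measurableT_comp (measurable_reflection b) measurable_snd.
exact: measurableT_comp (measurable_reflection c) measurable_fst.
Qed.

Lemma ge0_integral_swap_reflection
    (h : measurableTypeR R * measurableTypeR R -> \bar R) :
  measurable_fun setT h -> (forall z, 0 <= h z)%E ->
  (\int[@leb2 R]_z h (swap_reflection b c z) = \int[@leb2 R]_z h z)%E.
Proof.
move=> mh h0.
have mhT : measurable_fun setT (h \o swap_reflection b c).
  exact: measurableT_comp mh measurable_swap_reflection.
rewrite /leb2 (fubini_tonelli1 _ mhT (fun z => h0 _)) (fubini_tonelli2 _ mh h0).
rewrite /fubini_F /fubini_G /=.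
transitivity (\int[lebesgue_measure]_x
    (fun y => \int[lebesgue_measure]_u h (u, y)) (c - x)%R)%E.
  apply: eq_integral => x _ /=.
  apply: (ge0_integral_reflection b (h := fun u => h (u, c - x)%R)) => //.
  exact: measurable_fun_pair1.
apply: (ge0_integral_reflection c (h := fun y => \int[lebesgue_measure]_u h (u, y))%E).
  exact: measurable_fun_fubini_tonelli_G.
by move=> y; apply: integral_ge0 => u _.
Qed.

Lemma integral_swap_reflection (f : measurableTypeR R * measurableTypeR R -> R) :
  measurable_fun setT f ->
  (\int[@leb2 R]_z (f (swap_reflection b c z))%:E = \int[@leb2 R]_z (f z)%:E)%E.
Proof.
move=> mf; have mEf : measurable_fun setT (EFin \o f) by exact/measurable_EFinP.
rewrite integralE [RHS]integralE; congr (_ - _)%E.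
  rewrite -(ge0_integral_swap_reflection (h := (EFin \o f)^\+)%E).
  - by apply: eq_integral => z _; rewrite !funeposE.
  - exact: measurable_funepos.
  - by move=> z; exact: funepos_ge0.
rewrite -(ge0_integral_swap_reflection (h := (EFin \o f)^\-)%E).
- by apply: eq_integral => z _; rewrite !funenegE.
- exact: measurable_funeneg.
- by move=> z; exact: funeneg_ge0.
Qed.

Lemma cintegrable2_comp_swap_reflection (F : R * R -> R[i]) :
  cintegrable2 F -> cintegrable2 (F \o swap_reflection b c).
Proof.
case=> mRe mIm F_lty; split.
- exact: measurableT_comp mRe measurable_swap_reflection.
- exact: measurableT_comp mIm measurable_swap_reflection.
rewrite (ge0_integral_swap_reflection (h := fun z => (Normc.normc (F z))%:E)) //.
- by apply/measurable_EFinP; exact: measurable_normc.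
- by move=> z; rewrite lee_fin; case: (F z) => u v; exact: sqrtr_ge0.
Qed.

Lemma cint2_comp_swap_reflection (F : R * R -> R[i]) :
  measurable_fun setT (fun z => complex.Re (F z)) ->
  measurable_fun setT (fun z => complex.Im (F z)) ->
  cint2 (F \o swap_reflection b c) = cint2 F.
Proof.
move=> mRe mIm; rewrite /cint2 /Rintegral.
by rewrite (integral_swap_reflection mRe) (integral_swap_reflection mIm).
Qed.

End swap_reflection.

Local Open Scope complex_scope.

Section exponent.
Variable R : realType.

Definition exponent (a b : R[i]) (x y w : R) : R[i] :=
  - a * x%:C - b * y%:C - w%:C.

Lemma Re_exponent a b x y w :
  complex.Re (exponent a b x y w) = - complex.Re a * x - complex.Re b * y - w.
Proof. by case: a b => [ar ai] [br bi] /=; ring. Qed.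

Lemma Im_exponent a b x y w :
  complex.Im (exponent a b x y w) = - complex.Im a * x - complex.Im b * y.
Proof. by case: a b => [ar ai] [br bi] /=; ring. Qed.

End exponent.

Section integrands.
Variables (R : realType) (l1 l2 m1 m2 : R).

Definition lhs_weight (k : R * R) : R :=
  expR (- (l1 - k.1)) + expR (- (k.1 - l2)) + expR (- (l2 - k.2))
  + expR (- (m1 - k.1)) + expR (- (k.1 - m2)) + expR (- (m2 - k.2)).

Definition rhs_weight (p : R * R) : R :=
  expR (- (p.1 - l1)) + expR (- (l1 - p.2)) + expR (- (p.2 - l2))
  + expR (- (p.1 - m1)) + expR (- (m1 - p.2)) + expR (- (p.2 - m2)).

Lemma lhs_integrandE a b k : lhs_integrand a b l1 l2 m1 m2 k =
  cexp (exponent a b (l1 + l2 - k.1 - k.2) (m1 + m2 - k.1 - k.2) (lhs_weight k)).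
Proof. by case: k. Qed.

Lemma rhs_integrandE a b p : rhs_integrand a b l1 l2 m1 m2 p =
  cexp (exponent a b (p.1 + p.2 - m1 - m2) (p.1 + p.2 - l1 - l2) (rhs_weight p)).
Proof. by case: p. Qed.

Let A := expR (- l1) + expR (- m1).
Let B := expR l2 + expR m2.
Let C := expR l1 + expR m1.
Let D := expR (- l2) + expR (- m2).

Let A_gt0 : 0 < A. Proof. by rewrite addr_gt0 ?expR_gt0. Qed.
Let B_gt0 : 0 < B. Proof. by rewrite addr_gt0 ?expR_gt0. Qed.
Let C_gt0 : 0 < C. Proof. by rewrite addr_gt0 ?expR_gt0. Qed.
Let D_gt0 : 0 < D. Proof. by rewrite addr_gt0 ?expR_gt0. Qed.

Lemma lhs_weightE k : lhs_weight k = expR k.1 * A + expR (- k.1) * B + expR k.2 * D.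
Proof. by rewrite /lhs_weight /A /B /D !opprB !expRD; ring. Qed.

Lemma rhs_weightE p : rhs_weight p = expR (- p.1) * C + expR p.2 * A + expR (- p.2) * B.
Proof. by rewrite /rhs_weight /A /B /C !opprB !expRD; ring. Qed.

Definition shift1 := ln B - ln A.
Definition shift2 := ln C - ln D.

Lemma shift1_add_shift2 : shift1 + shift2 = l1 + l2 + m1 + m2.
Proof.
have BE : B = expR (l2 + m2) * D.
  by rewrite mulrDr -!expRD addrC; congr (expR _ + expR _); ring.
have CE : C = expR (l1 + m1) * A.
  by rewrite mulrDr -!expRD addrC; congr (expR _ + expR _); ring.
rewrite /shift1 /shift2 BE CE !lnM ?posrE ?expR_gt0 // !expRK; ring.
Qed.

Lemma lhs_weight_swap_reflection (p : R * R) :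
  lhs_weight (swap_reflection shift1 shift2 p) = rhs_weight p.
Proof.
have eA : expR shift1 * A = B by rewrite expRD expRN !lnK ?posrE // divfK ?gt_eqF.
have eD : expR shift2 * D = C by rewrite expRD expRN !lnK ?posrE // divfK ?gt_eqF.
have t1 : expR (shift1 - p.2) * A = expR (- p.2) * B by rewrite expRD mulrAC eA mulrC.
have t2 : expR (- (shift1 - p.2)) * B = expR p.2 * A.
  by rewrite opprB expRD -eA expRN mulrA divfK ?gt_eqF ?expR_gt0.
have t3 : expR (shift2 - p.1) * D = expR (- p.1) * C by rewrite expRD mulrAC eD mulrC.
by rewrite lhs_weightE rhs_weightE /= /reflection t1 t2 t3; ring.
Qed.

Lemma rhs_integrand_swap_reflection a b (p : R * R) :
  rhs_integrand a b l1 l2 m1 m2 p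
  = lhs_integrand a b l1 l2 m1 m2 (swap_reflection shift1 shift2 p).
Proof.
have shift12 := shift1_add_shift2.
have ex : l1 + l2 - (shift1 - p.2) - (shift2 - p.1) = p.1 + p.2 - m1 - m2 by lra.
have ey : m1 + m2 - (shift1 - p.2) - (shift2 - p.1) = p.1 + p.2 - l1 - l2 by lra.
by rewrite rhs_integrandE lhs_integrandE lhs_weight_swap_reflection ex ey.
Qed.

Lemma normc_lhs_integrand_le a b k :
  Normc.normc (lhs_integrand a b l1 l2 m1 m2 k)
  <= expR (- complex.Re a * (l1 + l2) - complex.Re b * (m1 + m2))
     * loggamma_kernel (complex.Re (a + b)) A k.1
     * loggamma_kernel (complex.Re (a + b)) D k.2.
Proof.
rewrite lhs_integrandE normc_cexp Re_exponent lhs_weightE /loggamma_kernel -!expRD.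
rewrite ler_expR raddfD /=.
have : 0 <= expR (- k.1) * B by rewrite mulr_ge0 ?expR_ge0 ?ltW.
lra.
Qed.

Local Ltac measurable_expr := repeat first
  [ exact: measurable_cst | exact: measurable_fst | exact: measurable_snd
  | apply: measurable_funD | apply: measurable_funB | apply: measurable_funN
  | apply: measurable_funM | apply: (measurableT_comp (@measurable_expR R)) ].

Lemma cintegrable2_lhs_integrand a b :
  0 < complex.Re (a + b) -> cintegrable2 (lhs_integrand a b l1 l2 m1 m2).
Proof.
move=> ab_gt0.
pose E k := exponent a b (l1 + l2 - k.1 - k.2) (m1 + m2 - k.1 - k.2) (lhs_weight k).
have mReE : measurable_fun setT (fun k => complex.Re (E k)).
  under eq_fun do rewrite Re_exponent lhs_weightE.
  by measurable_expr.
have mImE : measurable_fun setT (fun k => complex.Im (E k)).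
  by under eq_fun do rewrite Im_exponent; measurable_expr.
have mRe : measurable_fun setT (fun k => complex.Re (lhs_integrand a b l1 l2 m1 m2 k)).
  by under eq_fun do rewrite lhs_integrandE; exact: measurable_Re_cexp mReE mImE.
have mIm : measurable_fun setT (fun k => complex.Im (lhs_integrand a b l1 l2 m1 m2 k)).
  by under eq_fun do rewrite lhs_integrandE; exact: measurable_Im_cexp mReE mImE.
split => //.
apply: le_lt_trans (integral_loggamma_kernel2_lty _ ab_gt0 A_gt0 D_gt0).
apply: ge0_le_integral => //.
- by move=> k _; rewrite lee_fin lhs_integrandE normc_cexp expR_ge0.
- by apply/measurable_EFinP; exact: measurable_normc.
- apply/measurable_EFinP; apply: measurable_funM; last first.
    exact: measurableT_comp (measurable_loggamma_kernel _ _) measurable_snd.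
  apply: measurable_funM => //.
  exact: measurableT_comp (measurable_loggamma_kernel _ _) measurable_fst.
- by move=> k _; rewrite lee_fin; exact: normc_lhs_integrand_le.
Qed.

End integrands.

Theorem lemma3p5 (R : realType) (a b : R[i]) (l1 l2 m1 m2 : R) :
  0 < complex.Re (a + b) ->
  [/\ cintegrable2 (lhs_integrand a b l1 l2 m1 m2),
      cintegrable2 (rhs_integrand a b l1 l2 m1 m2) &
      cint2 (lhs_integrand a b l1 l2 m1 m2)
      = cint2 (rhs_integrand a b l1 l2 m1 m2)].
Proof.
move=> ab_gt0.
have F_int := cintegrable2_lhs_integrand l1 l2 m1 m2 ab_gt0.
have -> : rhs_integrand a b l1 l2 m1 m2 = lhs_integrand a b l1 l2 m1 m2
    \o swap_reflection (shift1 l1 l2 m1 m2) (shift2 l1 l2 m1 m2).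
  exact/funext/rhs_integrand_swap_reflection.
split => //; first exact: cintegrable2_comp_swap_reflection.
by case: F_int => mRe mIm _; rewrite cint2_comp_swap_reflection.
Qed.
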